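(* Let $D$ be a directed graph with vertex set $I$, $A=kD$ its path algebra over a field $k$, and let $r$ be any one of $r_b,r_k,r_l,r_j$. The following are equivalent: (i) every weak component of $D$ is a strong component; (ii) every unilateral component of $D$ is a strong component; (iii) the weak components, unilateral components and strong components of $D$ coincide; (iv) $D$ is the union of its strong components (every arrow lies in some strong component); (v) $D$ has no regular path; (vi) for all $i,j\in I$, $A_{ij}=0$ if and only if $A_{ji}=0$; (vii) $A$ is a direct sum of prime algebras; (viii) $A$ is semiprime; (ix) for all $i,j\in I$, $A_{ij}$ is a semiprime $A_{ji}$-ring; (x) $r(A_{ij})=0$ for all $i,j\in I$; (xi) $r(A)=0$.
   Context: The path algebra $kD=\bigoplus_{i,j\in I}A_{ij}$ with $A_{ij}$ the span of paths from $i$ to $j$ of length $\ge1$, plus the trivial path $e_{ii}$ if $i=j$; multiplication is concatenation. A weak component is a maximal subgraph whose underlying undirected graph is connected; a unilateral component is a maximal subgraph in which for any two vertices $u,v$ there is a path from $u$ to $v$ or from $v$ to $u$; a strong component is a maximal subgraph in which for any two vertices there are paths in both directions. A regular path is a path of length $\ge1$ from $i$ to $j$ such that there is no path from $j$ to $i$. An algebra is prime if $xAy=0$ implies $x=0$ or $y=0$, and semiprime if $xAx=0$ implies $x=0$. $A_{ij}$ is regarded as a $\Gamma$-ring with $\Gamma=A_{ji}$; it is semiprime if $xA_{ji}A_{ij}A_{ji}x=0$ with $x\in A_{ij}$ implies $x=0$. $r(A)$ is the ring radical ($r_b$ Baer, $r_k$ nil, $r_l$ Levitzki, $r_j$ Jacobson)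 and $r(A_{ij})$ the corresponding $\Gamma$-ring radical (Coppage–Luh). *)

From HB Require Import structures.
From mathcomp Require Import all_boot all_order all_algebra.
From Stdlib Require Import Relations.
From Stdlib Require List.

Set Implicit Arguments.
Unset Strict Implicit.
Unset Printing Implicit Defensive.
Import GRing.Theory.
Local Open Scope ring_scope.

Definition adj (I E : Type) (src tgt : E -> I) (u v : I) : Prop :=
  exists e, src e = u /\ tgt e = v.

Definition reach (I E : Type) (src tgt : E -> I) : relation I :=
  clos_refl_trans I (adj src tgt).

Record subgraph (I E : Type) := Subgraph { sg_v : I -> Prop; sg_e : E -> Prop }.

Definition is_subgraph (I E : Type) (src tgt : E -> I) (H : subgraph I E) :=
  forall e, sg_e H e -> sg_v H (src e) /\ sg_v H (tgt e).

Definition sg_le (I E : Type) (H H' : subgraph I E) :=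
  (forall v, sg_v H v -> sg_v H' v) /\ (forall e, sg_e H e -> sg_e H' e).

Definition adj_in (I E : Type) (src tgt : E -> I) (H : subgraph I E) (u v : I) :=
  exists e, sg_e H e /\ src e = u /\ tgt e = v.

Definition weakly_connected (I E : Type) (src tgt : E -> I) (H : subgraph I E) :=
  forall u v, sg_v H u -> sg_v H v -> clos_refl_sym_trans I (adj_in src tgt H) u v.

Definition unilaterally_connected (I E : Type) (src tgt : E -> I) (H : subgraph I E) :=
  forall u v, sg_v H u -> sg_v H v ->
    clos_refl_trans I (adj_in src tgt H) u v \/ clos_refl_trans I (adj_in src tgt H) v u.

Definition strongly_connected (I E : Type) (src tgt : E -> I) (H : subgraph I E) :=
  forall u v, sg_v H u -> sg_v H v ->
    clos_refl_trans I (adj_in src tgt H) u v /\ clos_refl_trans I (adj_in src tgt H) v u.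

Definition maximal_subgraph (I E : Type) (src tgt : E -> I)
  (P : subgraph I E -> Prop) (H : subgraph I E) :=
  is_subgraph src tgt H /\ P H /\
  forall H', is_subgraph src tgt H' -> P H' -> sg_le H H' -> sg_le H' H.

Definition weak_component (I E : Type) (src tgt : E -> I) :=
  maximal_subgraph src tgt (weakly_connected src tgt).
Definition unilateral_component (I E : Type) (src tgt : E -> I) :=
  maximal_subgraph src tgt (unilaterally_connected src tgt).
Definition strong_component (I E : Type) (src tgt : E -> I) :=
  maximal_subgraph src tgt (strongly_connected src tgt).

(* paths as a start vertex plus a list of composable arrows *)
Fixpoint is_walk (I E : Type) (src tgt : E -> I) (v : I) (l : seq E) : Prop :=
  match l with
  | [::] => True
  | e :: l' => src e = v /\ is_walk src tgt (tgt e) l'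
  end.

Fixpoint walk_end (I E : Type) (tgt : E -> I) (v : I) (l : seq E) : I :=
  match l with
  | [::] => v
  | e :: l' => walk_end tgt (tgt e) l'
  end.

Definition has_regular_path (I E : Type) (src tgt : E -> I) :=
  exists i j (l : seq E), is_walk src tgt i l /\ l <> [::] /\
    walk_end tgt i l = j /\ ~ reach src tgt j i.

(* Generic notions for (possibly non-unital) rings, given as a carrier *)
(* predicate R on a type T with operations.                            *)

Definition r_subgroup (T : Type) (R : T -> Prop) (zero : T) (add : T -> T -> T)
  (opp : T -> T) (U : T -> Prop) :=
  (forall x, U x -> R x) /\ U zero /\ (forall x y, U x -> U y -> U (add x y)) /\
  (forall x, U x -> U (opp x)).

Definition r_right_ideal (T : Type) (R : T -> Prop) (zero : T) (add : T -> T -> T)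
  (opp : T -> T) (mul : T -> T -> T) (U : T -> Prop) :=
  r_subgroup R zero add opp U /\ forall x a, U x -> R a -> U (mul x a).

Definition r_ideal (T : Type) (R : T -> Prop) (zero : T) (add : T -> T -> T)
  (opp : T -> T) (mul : T -> T -> T) (U : T -> Prop) :=
  r_right_ideal R zero add opp mul U /\ forall x a, U x -> R a -> U (mul a x).

Definition r_prime_ideal (T : Type) (R : T -> Prop) (zero : T) (add : T -> T -> T)
  (opp : T -> T) (mul : T -> T -> T) (P : T -> Prop) :=
  r_ideal R zero add opp mul P /\ (exists a, R a /\ ~ P a) /\
  forall U V, r_ideal R zero add opp mul U -> r_ideal R zero add opp mul V ->
    (forall u v, U u -> V v -> P (mul u v)) ->
    (forall u, U u -> P u) \/ (forall v, V v -> P v).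

Definition r_prime (T : Type) (R : T -> Prop) (zero : T) (mul : T -> T -> T) :=
  forall x y, R x -> R y -> (forall a, R a -> mul (mul x a) y = zero) ->
    x = zero \/ y = zero.

Definition r_semiprime (T : Type) (R : T -> Prop) (zero : T) (mul : T -> T -> T) :=
  forall x, R x -> (forall a, R a -> mul (mul x a) x = zero) -> x = zero.

Fixpoint rprod (T : Type) (mul : T -> T -> T) (x : T) (s : seq T) : T :=
  match s with
  | [::] => x
  | y :: s' => mul x (rprod mul y s')
  end.

Definition r_nilpotent_set (T : Type) (zero : T) (mul : T -> T -> T) (F : seq T) :=
  exists n : nat, forall x (s : seq T), List.In x F -> size s = n ->
    (forall y, List.In y s -> List.In y F) -> rprod mul x s = zero.

(* Baer (prime) radical = intersection of the prime ideals *)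
Definition r_baer_zero (T : Type) (R : T -> Prop) (zero : T) (add : T -> T -> T)
  (opp : T -> T) (mul : T -> T -> T) :=
  forall x, R x -> (forall P, r_prime_ideal R zero add opp mul P -> P x) -> x = zero.

(* upper nil (Koethe) radical = sum of nil ideals *)
Definition r_nil_zero (T : Type) (R : T -> Prop) (zero : T) (add : T -> T -> T)
  (opp : T -> T) (mul : T -> T -> T) :=
  forall U, r_ideal R zero add opp mul U ->
    (forall x, U x -> r_nilpotent_set zero mul [:: x]) ->
    forall x, U x -> x = zero.

(* Levitzki radical = sum of locally nilpotent ideals *)
Definition r_levitzki_zero (T : Type) (R : T -> Prop) (zero : T) (add : T -> T -> T)
  (opp : T -> T) (mul : T -> T -> T) :=
  forall U, r_ideal R zero add opp mul U ->
    (forall F : seq T, (forall x, List.In x F -> U x) -> r_nilpotent_set zero mul F) ->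
    forall x, U x -> x = zero.

Definition r_rqr (T : Type) (R : T -> Prop) (zero : T) (add : T -> T -> T)
  (mul : T -> T -> T) (x : T) :=
  exists y, R y /\ add (add x y) (mul x y) = zero.

(* Jacobson radical = sum of the right quasi-regular right ideals *)
Definition r_jacobson_zero (T : Type) (R : T -> Prop) (zero : T) (add : T -> T -> T)
  (opp : T -> T) (mul : T -> T -> T) :=
  forall U, r_right_ideal R zero add opp mul U ->
    (forall x, U x -> r_rqr R zero add mul x) -> forall x, U x -> x = zero.

Inductive radical_kind := rad_b | rad_k | rad_l | rad_j.

Definition ring_radical_zero (rk : radical_kind) (T : Type) (R : T -> Prop) (zero : T)
  (add : T -> T -> T) (opp : T -> T) (mul : T -> T -> T) : Prop :=
  match rk with
  | rad_b => r_baer_zero R zero add opp mul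
  | rad_k => r_nil_zero R zero add opp mul
  | rad_l => r_levitzki_zero R zero add opp mul
  | rad_j => r_jacobson_zero R zero add opp mul
  end.

(* Gamma-rings (Barnes / Coppage--Luh): M, Gamma carriers in T, with   *)
(* the ternary product gmul x g y = "x g y" in M.                      *)

Definition g_right_ideal (T : Type) (M G : T -> Prop) (zero : T) (add : T -> T -> T)
  (opp : T -> T) (gmul : T -> T -> T -> T) (U : T -> Prop) :=
  r_subgroup M zero add opp U /\
  forall x g a, U x -> G g -> M a -> U (gmul x g a).

Definition g_ideal (T : Type) (M G : T -> Prop) (zero : T) (add : T -> T -> T)
  (opp : T -> T) (gmul : T -> T -> T -> T) (U : T -> Prop) :=
  g_right_ideal M G zero add opp gmul U /\
  forall x g a, U x -> G g -> M a -> U (gmul a g x).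

Definition g_prime_ideal (T : Type) (M G : T -> Prop) (zero : T) (add : T -> T -> T)
  (opp : T -> T) (gmul : T -> T -> T -> T) (P : T -> Prop) :=
  g_ideal M G zero add opp gmul P /\ (exists a, M a /\ ~ P a) /\
  forall U V, g_ideal M G zero add opp gmul U -> g_ideal M G zero add opp gmul V ->
    (forall u g v, U u -> G g -> V v -> P (gmul u g v)) ->
    (forall u, U u -> P u) \/ (forall v, V v -> P v).

Fixpoint gprod (T : Type) (gmul : T -> T -> T -> T) (x : T) (s : seq (T * T)) : T :=
  match s with
  | [::] => x
  | (g, y) :: s' => gmul x g (gprod gmul y s')
  end.

Definition g_nilpotent_set (T : Type) (G : T -> Prop) (zero : T)
  (gmul : T -> T -> T -> T) (F : seq T) :=
  exists n : nat, forall x (s : seq (T * T)), List.In x F -> size s = n ->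
    (forall p, List.In p s -> G p.1 /\ List.In p.2 F) -> gprod gmul x s = zero.

Definition g_baer_zero (T : Type) (M G : T -> Prop) (zero : T) (add : T -> T -> T)
  (opp : T -> T) (gmul : T -> T -> T -> T) :=
  forall x, M x -> (forall P, g_prime_ideal M G zero add opp gmul P -> P x) -> x = zero.

Definition g_nil_zero (T : Type) (M G : T -> Prop) (zero : T) (add : T -> T -> T)
  (opp : T -> T) (gmul : T -> T -> T -> T) :=
  forall U, g_ideal M G zero add opp gmul U ->
    (forall x, U x -> g_nilpotent_set G zero gmul [:: x]) ->
    forall x, U x -> x = zero.

Definition g_levitzki_zero (T : Type) (M G : T -> Prop) (zero : T) (add : T -> T -> T)
  (opp : T -> T) (gmul : T -> T -> T -> T) :=
  forall U, g_ideal M G zero add opp gmul U ->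
    (forall F : seq T, (forall x, List.In x F -> U x) -> g_nilpotent_set G zero gmul F) ->
    forall x, U x -> x = zero.

Definition tsum (T : Type) (zero : T) (add : T -> T -> T) (s : seq T) : T :=
  foldr add zero s.

(* Coppage--Luh: a is r.q.r. if for every g in Gamma there are x_i in M,
   d_i in Gamma with  a g b + sum x_i d_i b - sum a g x_i d_i b = 0  for all b in M *)
Definition g_rqr (T : Type) (M G : T -> Prop) (zero : T) (add : T -> T -> T)
  (opp : T -> T) (gmul : T -> T -> T -> T) (a : T) :=
  forall g, G g -> exists s : seq (T * T),
    (forall p, List.In p s -> M p.1 /\ G p.2) /\
    forall b, M b ->
      add (add (gmul a g b) (tsum zero add (map (fun p => gmul p.1 p.2 b) s)))
          (opp (tsum zero add (map (fun p => gmul (gmul a g p.1) p.2 b) s))) = zero.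

Definition g_jacobson_zero (T : Type) (M G : T -> Prop) (zero : T) (add : T -> T -> T)
  (opp : T -> T) (gmul : T -> T -> T -> T) :=
  forall U, g_right_ideal M G zero add opp gmul U ->
    (forall x, U x -> g_rqr M G zero add opp gmul x) -> forall x, U x -> x = zero.

Definition gamma_radical_zero (rk : radical_kind) (T : Type) (M G : T -> Prop) (zero : T)
  (add : T -> T -> T) (opp : T -> T) (gmul : T -> T -> T -> T) : Prop :=
  match rk with
  | rad_b => g_baer_zero M G zero add opp gmul
  | rad_k => g_nil_zero M G zero add opp gmul
  | rad_l => g_levitzki_zero M G zero add opp gmul
  | rad_j => g_jacobson_zero M G zero add opp gmul
  end.

Definition g_semiprime (T : Type) (M G : T -> Prop) (zero : T) (gmul : T -> T -> T -> T) :=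
  forall x, M x ->
    (forall g a d, G g -> M a -> G d -> gmul (gmul x g a) d x = zero) -> x = zero.

(* The path algebra kD: finitely supported k-valued functions on paths *)
(* (v, l) (start vertex, composable list of arrows); product is        *)
(* concatenation, i.e. convolution over the splittings of a path.      *)

Definition pa_T (k : fieldType) (I E : Type) := I -> seq E -> k.

Definition pa_zero (k : fieldType) (I E : Type) : pa_T k I E := fun _ _ => 0.
Definition pa_add (k : fieldType) (I E : Type) (f g : pa_T k I E) : pa_T k I E :=
  fun v l => f v l + g v l.
Definition pa_opp (k : fieldType) (I E : Type) (f : pa_T k I E) : pa_T k I E :=
  fun v l => - f v l.
Definition pa_scal (k : fieldType) (I E : Type) (c : k) (f : pa_T k I E) : pa_T k I E :=
  fun v l => c * f v l.
Definition pa_mul (k : fieldType) (I E : Type) (tgt : E -> I) (f g : pa_T k I E)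
  : pa_T k I E :=
  fun v l => \sum_(m < (size l).+1)
               f v (take m l) * g (walk_end tgt v (take m l)) (drop m l).

Definition in_kD (k : fieldType) (I E : Type) (src tgt : E -> I) (f : pa_T k I E) :=
  (forall v l, ~ is_walk src tgt v l -> f v l = 0) /\
  exists s : seq (I * seq E), forall v l, f v l <> 0 -> List.In (v, l) s.

(* A_ij : span of the paths from i to j (including e_ii when i = j) *)
Definition A_sub (k : fieldType) (I E : Type) (src tgt : E -> I) (i j : I)
  (f : pa_T k I E) :=
  in_kD src tgt f /\ forall v l, f v l <> 0 -> v = i /\ walk_end tgt v l = j.

(* gamma product on the Gamma-ring A_ij with Gamma = A_ji *)
Definition pa_gmul (k : fieldType) (I E : Type) (tgt : E -> I) (x g y : pa_T k I E) :=
  pa_mul tgt (pa_mul tgt x g) y.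

(* kD is an (internal) direct sum of prime algebras: a family of ideals
   (closed under scalars, i.e. subalgebras) that are prime algebras,
   generate kD, and are independent. *)
Definition pa_direct_sum_of_primes (k : fieldType) (I E : Type) (src tgt : E -> I) :=
  exists (J : Type) (B : J -> pa_T k I E -> Prop),
    (forall j, r_ideal (in_kD src tgt) (@pa_zero k I E) (@pa_add k I E) (@pa_opp k I E)
                  (pa_mul tgt) (B j) /\
               forall c x, B j x -> B j (pa_scal c x)) /\
    (forall j, r_prime (B j) (@pa_zero k I E) (pa_mul tgt)) /\
    (forall x, in_kD src tgt x -> exists s : seq (J * pa_T k I E),
        (forall p, List.In p s -> B p.1 p.2) /\
        x = tsum (@pa_zero k I E) (@pa_add k I E) (map snd s)) /\
    (forall j x (s : seq (J * pa_T k I E)), B j x ->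
        (forall p, List.In p s -> p.1 <> j /\ B p.1 p.2) ->
        x = tsum (@pa_zero k I E) (@pa_add k I E) (map snd s) -> x = @pa_zero k I E).

From HB Require Import structures.
From mathcomp Require Import all_boot all_order all_algebra.
From Stdlib Require Import Relations.
From Stdlib Require List.
From mathcomp Require Import zify ring boolp.
From mathcomp Require classical_sets.
From Stdlib Require Import Lia Classical.

Set Implicit Arguments.
Unset Strict Implicit.
Unset Printing Implicit Defensive.
Import GRing.Theory.

(* Every condition is equivalent to the symmetry of reachability in D: whenever
   there is a path from i to j, there is one from j back to i.

   On the graph side, symmetry makes every weak class strongly connected, so weak,
   unilateral and strong components are all the weak classes; conversely an arrow
   with no path back from its target lies in a unilateral component (Zorn's lemma)
   that is not strong.

   On the algebra side, a nonzero f in kD has a leading path, a longest path with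
   nonzero coefficient, and leading paths multiply: the coefficient of p ++ q in
   f g is the product of the leading coefficients.  Under symmetry the leading path
   p of x, from v to u, closes up with a path q from u back to v, so x q x, (x q)^n,
   x q x q x, ... have nonzero leading coefficients.  This rules out x A x = 0 and
   nonzero nil or locally nilpotent ideals, in A as well as in the Gamma-ring A_ij
   (q lies in A_ji), and, once the coefficient of the cycle p q is scaled to -1,
   right quasi-regularity; it also provides enough prime ideals, and the
   reachability classes split kD into prime ideals.  Without symmetry, a path from
   i to j with no path back spans a nonzero ideal of square zero, and A_ji = 0
   kills every Gamma-product in A_ij. *)

Definition reach_sym (I E : Type) (src tgt : E -> I) :=
  forall u v, reach src tgt u v -> reach src tgt v u.

Lemma big_ord_shift (R : nmodType) (n s : nat) (G : nat -> R) : (s <= n)%N ->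
  (\sum_(r < (n - s).+1) G r = \sum_(t < n.+1) (if (s <= t)%N then G (t - s)%N else 0))%R.
Proof.
move=> sn.
rewrite -(big_mkord xpredT G).
rewrite -(big_mkord xpredT (fun t => if (s <= t)%N then G (t - s)%N else 0%R)).
rewrite [in RHS](@big_cat_nat _ _ _ s 0 n.+1) //=; last by rewrite ltnW.
have -> : (\sum_(0 <= i < s) (if (s <= i)%N then G (i - s)%N else 0) = 0)%R.
  apply: big1_seq => i /=; rewrite mem_index_iota => /andP[_].
  by rewrite ltnNge => /negbTE ->.
rewrite add0r -{2}(add0n s) big_addn.
have -> : (n.+1 - s = (n - s).+1)%N by rewrite subSn.
by apply: eq_big_nat => i _; rewrite leq_addl addnK.
Qed.

Lemma r_levitzki_zero_of_nil (X : Type) (R : X -> Prop) zero add opp mul :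
  r_nil_zero R zero add opp mul -> r_levitzki_zero R zero add opp mul.
Proof. by move=> H U IU HF; apply: (H U IU) => x Ux; apply: HF => y [<-|[]]. Qed.

Lemma g_levitzki_zero_of_nil (X : Type) (M G : X -> Prop) zero add opp gmul :
  g_nil_zero M G zero add opp gmul -> g_levitzki_zero M G zero add opp gmul.
Proof. by move=> H U IU HF; apply: (H U IU) => x Ux; apply: HF => y [<-|[]]. Qed.

Lemma In_filter (X : Type) (P : pred X) (x : X) s :
  List.In x (filter P s) <-> List.In x s /\ P x.
Proof.
elim: s => [|y s IH] /=; first by split => [|[]].
case: ifP => Py /=; rewrite IH; split.
- by move=> [<-|[H1 H2]]; split => //; [left|right].
- by move=> [[<-|H1] H2]; [left|right].
- by move=> [H1 H2]; split => //; right.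
- by move=> [[Exy|H1] H2] //; move: Py; rewrite Exy H2.
Qed.

(** * Walks and reachability *)

Section Walks.
Variables (I E : Type) (src tgt : E -> I).
Local Notation wend := (walk_end tgt).
Local Notation walk := (is_walk src tgt).
Local Notation reach := (reach src tgt).

Lemma walk_end_cat v l1 l2 : wend v (l1 ++ l2) = wend (wend v l1) l2.
Proof. by elim: l1 v => [|e l1 IH] v //=. Qed.

Lemma is_walk_cat v l1 l2 : walk v (l1 ++ l2) <-> walk v l1 /\ walk (wend v l1) l2.
Proof. by elim: l1 v => [|e l1 IH] v /=; [tauto|rewrite IH; tauto]. Qed.

Lemma reach_walk u v : reach u v <-> exists l, walk u l /\ wend u l = v.
Proof.
split.
  elim => [x y [e [<- <-]]|x|x y z _ [l1 [W1 E1]] _ [l2 [W2 E2]]].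
  - by exists [:: e].
  - by exists [::].
  - exists (l1 ++ l2); rewrite walk_end_cat E1 E2; split => //.
    by apply/is_walk_cat; rewrite E1.
move=> [l []]; elim: l u => [|e l IH] u /=; first by move=> _ ->; apply: rt_refl.
move=> [Hs W] Ht; apply: rt_trans (IH _ W Ht); apply: rt_step; by exists e.
Qed.

Lemma reach_trans u v w : reach u v -> reach v w -> reach u w.
Proof. exact: rt_trans. Qed.

Lemma reach_walk_end v l : walk v l -> reach v (wend v l).
Proof. by move=> W; apply/reach_walk; exists l. Qed.

Lemma nonreturning_walk : ~ reach_sym src tgt ->
  exists i j l, walk i l /\ wend i l = j /\ ~ reach j i.
Proof.
move=> NS; apply: NNPP => C; apply: NS => u v R; apply: NNPP => N.
by have [l [W E0]] := (reach_walk u v).1 R; apply: C; exists u, v, l.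
Qed.

Lemma reach_sym_iff_no_regular_path : reach_sym src tgt <-> ~ has_regular_path src tgt.
Proof.
split.
  by move=> S [i [j [l [W [_ [El Nr]]]]]]; apply/Nr/S; rewrite -El; exact: reach_walk_end.
move=> NR u v R; apply: NNPP => N.
have [[|e l] [W El]] := (reach_walk u v).1 R; first by apply: N; rewrite -El; exact: rt_refl.
by apply: NR; exists u, v, (e :: l).
Qed.

Lemma nonreturning_arrow a b : reach a b -> ~ reach b a -> exists e, ~ reach (tgt e) (src e).
Proof.
move=> /clos_rt_rt1n_iff R; elim: R => [x|x y z [e [Hs Ht]] R IH] N.
  by case: N; exact: rt_refl.
case: (classic (reach y x)) => Ryx; last by exists e; rewrite Hs Ht.
by apply: IH => Rzy; apply: N; exact: rt_trans Rzy Ryx.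
Qed.

End Walks.

(** * Weak, unilateral and strong components *)

Section Components.
Variables (I E : Type) (src tgt : E -> I).
Local Notation reach := (reach src tgt).
Local Notation rst := (clos_refl_sym_trans I (adj src tgt)).
Local Notation subg := (subgraph I E).
Local Notation is_subgraph := (is_subgraph src tgt).
Local Notation adj_in := (adj_in src tgt).

Lemma rst_mono (R1 R2 : relation I) a b : (forall x y, R1 x y -> R2 x y) ->
  clos_refl_sym_trans I R1 a b -> clos_refl_sym_trans I R2 a b.
Proof.
move=> H; elim => [x y /H|x|x y _ IH|x y z _ IH1 _ IH2].
- exact: rst_step.
- exact: rst_refl.
- exact: rst_sym.
- exact: rst_trans IH1 IH2.
Qed.

Lemma rt_mono (R1 R2 : relation I) a b : (forall x y, R1 x y -> R2 x y) ->
  clos_refl_trans I R1 a b -> clos_refl_trans I R2 a b.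
Proof.
move=> H; elim => [x y /H|x|x y z _ IH1 _ IH2].
- exact: rt_step.
- exact: rt_refl.
- exact: rt_trans IH1 IH2.
Qed.

Lemma adj_in_adj (H : subg) x y : adj_in H x y -> adj src tgt x y.
Proof. by move=> [e [_ [Hs Ht]]]; exists e. Qed.

Lemma adj_in_mono (H H' : subg) x y : (forall e, sg_e H e -> sg_e H' e) ->
  adj_in H x y -> adj_in H' x y.
Proof. by move=> S [e [He Hst]]; exists e; split => //; exact: S. Qed.

Lemma reach_of_rt_in (H : subg) a b : clos_refl_trans I (adj_in H) a b -> reach a b.
Proof. by apply: rt_mono; exact: adj_in_adj. Qed.

Lemma sg_le_refl (H : subg) : sg_le H H.
Proof. by split. Qed.

Lemma sg_le_trans (H1 H2 H3 : subg) : sg_le H1 H2 -> sg_le H2 H3 -> sg_le H1 H3.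
Proof. by move=> [a b] [c d]; split => x Hx; [exact: c (a x Hx)|exact: d (b x Hx)]. Qed.

Lemma weakly_of_unilaterally H : unilaterally_connected src tgt H -> weakly_connected src tgt H.
Proof.
move=> U a b Ha Hb; case: (U a b Ha Hb) => R; first exact: clos_rt_clos_rst.
by apply: rst_sym; exact: clos_rt_clos_rst.
Qed.

Lemma unilaterally_of_strongly H : strongly_connected src tgt H -> unilaterally_connected src tgt H.
Proof. by move=> S a b Ha Hb; left; exact: (S a b Ha Hb).1. Qed.

Definition weak_class (u : I) : subg := Subgraph (fun w => rst u w) (fun e => rst u (src e)).

Lemma weak_class_subgraph u : is_subgraph (weak_class u).
Proof.
move=> e /= H; split => //; apply: rst_trans H _; apply: rst_step; by exists e.
Qed.

Lemma weak_class_rst_in u a b :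
  rst u a -> rst a b -> clos_refl_sym_trans I (adj_in (weak_class u)) a b.
Proof.
move=> Ha /clos_rst_rst1n_iff H; elim: H Ha => [x|x y z Hxy _ IH] Hx; first exact: rst_refl.
have Hy : rst u y.
  case: Hxy => [Hxy|Hyx]; first exact: rst_trans Hx (rst_step _ _ _ _ Hxy).
  exact: rst_trans Hx (rst_sym _ _ _ _ (rst_step _ _ _ _ Hyx)).
apply: rst_trans (IH Hy).
case: Hxy => [[e [Hs Ht]]|[e [Hs Ht]]].
  by apply: rst_step; exists e; split => //=; rewrite Hs.
by apply: rst_sym; apply: rst_step; exists e; split => //=; rewrite Hs.
Qed.

Lemma weak_class_weakly_connected u : weakly_connected src tgt (weak_class u).
Proof.
move=> w1 w2 /= H1 H2.
exact: rst_trans (rst_sym _ _ _ _ (weak_class_rst_in (rst_refl _ _ u) H1))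
                 (weak_class_rst_in (rst_refl _ _ u) H2).
Qed.

Lemma weak_class_max u (H : subg) : is_subgraph H -> weakly_connected src tgt H ->
  sg_v H u -> sg_le H (weak_class u).
Proof.
move=> Hs Hw Hu; have Vw w : sg_v H w -> rst u w.
  by move=> Hw'; apply: rst_mono (Hw u w Hu Hw'); exact: adj_in_adj.
by split => //= e He; apply: Vw; exact: (Hs e He).1.
Qed.

Lemma weak_class_component u : weak_component src tgt (weak_class u).
Proof.
split; first exact: weak_class_subgraph.
split; first exact: weak_class_weakly_connected.
move=> H' Hs Hw [Lv _]; apply: weak_class_max => //; apply: Lv; exact: rst_refl.
Qed.

Definition sg_equiv (H H' : subg) := sg_le H H' /\ sg_le H' H.

(* If [I] is empty, the empty subgraph is a component of each kind. *)
Definition is_weak_class (H : subg) :=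
  is_subgraph H /\ ((exists u, sg_equiv H (weak_class u)) \/ (I -> False)).

Lemma maximal_subgraph_weak_classE (P : subg -> Prop) :
  (forall H, P H -> weakly_connected src tgt H) -> (forall u, P (weak_class u)) ->
  (forall H H', sg_equiv H H' -> P H -> P H') ->
  (forall H, (forall v, ~ sg_v H v) -> P H) ->
  forall H, maximal_subgraph src tgt P H <-> is_weak_class H.
Proof.
move=> Pw Pu Peq P0 H; split.
  move=> [Hsub [PH Hmax]]; split => //.
  case: (classic (exists u, sg_v H u)) => [[u Hu]|Nu].
    have HW := weak_class_max Hsub (Pw _ PH) Hu.
    by left; exists u; split; [exact: HW|exact: Hmax (@weak_class_subgraph u) (Pu u) HW].
  right => u; have HW : sg_le H (weak_class u).
    split => [v Hv|e He]; case: Nu; [by exists v|exists (src e); exact: (Hsub e He).1].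
  have [Lv _] := Hmax _ (@weak_class_subgraph u) (Pu u) HW.
  by apply: Nu; exists u; apply: Lv; exact: rst_refl.
move=> [Hsub C]; split => //; split.
  case: C => [[u [L1 L2]]|N]; first by apply: Peq (Pu u); split.
  by apply: P0 => v _; exact: N v.
move=> H' Hs' P' L; case: C => [[u [L1 L2]]|N].
  have Hu : sg_v H' u by apply: L.1; apply: L2.1; exact: rst_refl.
  exact: sg_le_trans (weak_class_max Hs' (Pw _ P') Hu) L2.
by split => [v _|e _]; case: N; [exact: v|exact: src e].
Qed.

Lemma weak_componentE H : weak_component src tgt H <-> is_weak_class H.
Proof.
apply: maximal_subgraph_weak_classE => //.
- exact: weak_class_weakly_connected.
- move=> H1 H2 [[_ L1e] [L2v _]] W a b Ha Hb.
  by apply: rst_mono (W a b (L2v _ Ha) (L2v _ Hb)) => x y; exact: adj_in_mono.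
- by move=> H1 N a b Ha; case: (N a).
Qed.

Section ReachSymmetric.
Hypothesis reach_symmetric : reach_sym src tgt.

Lemma reach_of_rst a b : rst a b -> reach a b.
Proof.
elim => [x y H|x|x y _ IH|x y z _ IH1 _ IH2].
- exact: rt_step.
- exact: rt_refl.
- exact: reach_symmetric.
- exact: rt_trans IH1 IH2.
Qed.

Lemma weak_class_rt_in u a b :
  rst u a -> reach a b -> clos_refl_trans I (adj_in (weak_class u)) a b.
Proof.
move=> Ha R; elim: R Ha => [x y [e [Hs Ht]]|x|x y z R1 IH1 R2 IH2] Hx.
- by apply: rt_step; exists e; split => //=; rewrite Hs.
- exact: rt_refl.
- by apply: rt_trans (IH1 Hx) (IH2 _); apply: rst_trans Hx (clos_rt_clos_rst _ _ _ _ R1).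
Qed.

Lemma weak_class_strongly_connected u : strongly_connected src tgt (weak_class u).
Proof.
move=> w1 w2 /= H1 H2; have R12 : rst w1 w2 by apply: rst_trans (rst_sym _ _ _ _ H1) H2.
split; [apply: weak_class_rt_in H1 _|apply: weak_class_rt_in H2 _]; apply: reach_of_rst => //.
exact: rst_sym.
Qed.

Lemma unilateral_componentE H : unilateral_component src tgt H <-> is_weak_class H.
Proof.
apply: maximal_subgraph_weak_classE => //.
- exact: weakly_of_unilaterally.
- by move=> u; apply: unilaterally_of_strongly; exact: weak_class_strongly_connected.
- move=> H1 H2 [[_ L1e] [L2v _]] U a b Ha Hb.
  case: (U a b (L2v _ Ha) (L2v _ Hb)) => R; [left|right];
    by apply: rt_mono R => x y; exact: adj_in_mono.
- by move=> H1 N a b Ha; case: (N a).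
Qed.

Lemma strong_componentE H : strong_component src tgt H <-> is_weak_class H.
Proof.
apply: maximal_subgraph_weak_classE => //.
- by move=> H1 S; apply/weakly_of_unilaterally/unilaterally_of_strongly.
- exact: weak_class_strongly_connected.
- move=> H1 H2 [[_ L1e] [L2v _]] S a b Ha Hb.
  have [R1 R2] := S a b (L2v _ Ha) (L2v _ Hb).
  by split; apply: rt_mono; try eassumption; move=> x y; exact: adj_in_mono.
- by move=> H1 N a b Ha; case: (N a).
Qed.

End ReachSymmetric.

Lemma reach_sym_iff_weak_components_strong :
  reach_sym src tgt <-> (forall H, weak_component src tgt H -> strong_component src tgt H).
Proof.
split; first by move=> S H; rewrite weak_componentE (strong_componentE S).
move=> Hi a b R; have [_ [Sc _]] := Hi _ (weak_class_component a).
have [_ R2] := Sc a b (rst_refl _ _ a) (clos_rt_clos_rst _ _ _ _ R).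
exact: reach_of_rt_in R2.
Qed.

Lemma reach_sym_iff_components_coincide : reach_sym src tgt <-> (forall H,
  (weak_component src tgt H <-> unilateral_component src tgt H) /\
  (unilateral_component src tgt H <-> strong_component src tgt H)).
Proof.
split.
  by move=> S H; rewrite weak_componentE (unilateral_componentE S) (strong_componentE S).
move=> H3; apply/reach_sym_iff_weak_components_strong => H W.
by apply/(H3 H).2; exact/(H3 H).1.
Qed.

Lemma reach_sym_iff_strong_components_cover : reach_sym src tgt <->
  (forall v, exists H, strong_component src tgt H /\ sg_v H v) /\
  (forall e, exists H, strong_component src tgt H /\ sg_e H e).
Proof.
split.
  move=> S; have Sw u : strong_component src tgt (weak_class u).
    by apply/(strong_componentE S); split; [exact: weak_class_subgraph|left; exists u].
  split => [v|e]; [exists (weak_class v)|exists (weak_class (src e))];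
    by split => //=; exact: rst_refl.
move=> [_ He] a b; elim => [x y [e [<- <-]]|x|x y z _ IH1 _ IH2].
- have [H [[Hsub [Sc _]] HeH]] := He e; have [Vs Vt] := Hsub e HeH.
  exact: reach_of_rt_in (Sc _ _ Vs Vt).2.
- exact: rt_refl.
- exact: rt_trans IH2 IH1.
Qed.

Definition sg_union (A : subg -> Prop) : subg :=
  Subgraph (fun v => exists H, A H /\ sg_v H v) (fun e => exists H, A H /\ sg_e H e).

Lemma sg_union_ub (A : subg -> Prop) H : A H -> sg_le H (sg_union A).
Proof. by move=> AH; split => [v|e] Hx; exists H. Qed.

Lemma chain_union_unilateral (A : subg -> Prop) :
  (forall H, A H -> is_subgraph H /\ unilaterally_connected src tgt H) ->
  (forall H H', A H -> A H' -> sg_le H H' \/ sg_le H' H) ->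
  is_subgraph (sg_union A) /\ unilaterally_connected src tgt (sg_union A).
Proof.
move=> HA Tot; split.
  move=> e [H [AH He]]; have [Hs _] := HA H AH; have [Vs Vt] := Hs e He.
  by split; exists H.
have inU H a b : A H -> sg_v H a -> sg_v H b ->
    clos_refl_trans I (adj_in (sg_union A)) a b \/ clos_refl_trans I (adj_in (sg_union A)) b a.
  move=> AH Ha Hb; have [_ UH] := HA H AH.
  case: (UH a b Ha Hb) => R; [left|right];
    by apply: rt_mono R => x y; apply: adj_in_mono => e He; exists H.
move=> a b [H1 [A1 V1]] [H2 [A2 V2]].
case: (Tot H1 H2 A1 A2) => [[Lv _]|[Lv _]]; [apply: (inU H2)|apply: (inU H1)] => //; exact: Lv.
Qed.

Lemma exists_unilateral_component (H0 : subg) :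
  is_subgraph H0 -> unilaterally_connected src tgt H0 ->
  exists H, unilateral_component src tgt H /\ sg_le H0 H.
Proof.
move=> S0 U0.
pose T0 := {H : subg | is_subgraph H /\ unilaterally_connected src tgt H /\ sg_le H0 H}.
pose le (x y : T0) := `[< sg_le (proj1_sig x) (proj1_sig y) >].
have t0 : T0 := exist _ H0 (conj S0 (conj U0 (sg_le_refl H0))).
have [| | |[H [Hs [Hu Hle]]] Hmax] := @classical_sets.ZL_preorder T0 t0 le.
- by move=> t; apply/asboolP; exact: sg_le_refl.
- by move=> r s t /asboolP H1 /asboolP H2; apply/asboolP; exact: sg_le_trans H1 H2.
- move=> A Tot; pose A' H := H = H0 \/ exists t, A t /\ proj1_sig t = H.
  have [Us Uu] : is_subgraph (sg_union A') /\ unilaterally_connected src tgt (sg_union A').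
    apply: chain_union_unilateral => [H [->|[t [_ <-]]]|H H' [->|[t [At <-]]] [->|[t' [At' <-]]]].
    + by [].
    + by have [? [? _]] := proj2_sig t.
    + by left; exact: sg_le_refl.
    + by left; have [_ [_ ?]] := proj2_sig t'.
    + by right; have [_ [_ ?]] := proj2_sig t.
    + by case: (Tot t t' At At') => /asboolP; [left|right].
  exists (exist _ (sg_union A') (conj Us (conj Uu (sg_union_ub (or_introl erefl))))).
  by move=> t At; apply/asboolP; apply: sg_union_ub; right; exists t.
exists H; split => //; split => //; split => // H' Hs' Hu' L.
by apply/asboolP/(Hmax (exist _ H' (conj Hs' (conj Hu' (sg_le_trans Hle L))))); apply/asboolP.
Qed.

Lemma reach_sym_iff_unilateral_components_strong : reach_sym src tgt <->
  (forall H, unilateral_component src tgt H -> strong_component src tgt H).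
Proof.
split; first by move=> S H; rewrite (unilateral_componentE S) (strong_componentE S).
move=> Hii a b R; apply: NNPP => N; have [e Ne] := nonreturning_arrow R N.
pose H0 := Subgraph (fun w => w = src e \/ w = tgt e) (fun e' => e' = e).
have S0 : is_subgraph H0 by move=> e' /= ->; split; [left|right].
have U0 : unilaterally_connected src tgt H0.
  move=> x y /= [->|->] [->|->]; try by left; exact: rt_refl.
    by left; apply: rt_step; exists e.
  by right; apply: rt_step; exists e.
have [H [Hu [Lv _]]] := exists_unilateral_component S0 U0.
have [_ [Sc _]] := Hii H Hu.
exact/Ne/reach_of_rt_in/(Sc _ _ (Lv _ (or_introl erefl)) (Lv _ (or_intror erefl))).2.
Qed.

End Components.

(** * The path algebra *)

Section PathAlgebra.
Variables (k : fieldType) (I E : Type) (src tgt : E -> I).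
Local Notation T := (pa_T k I E).
Local Notation mul := (pa_mul tgt).
Local Notation zero := (@pa_zero k I E).
Local Notation add := (@pa_add k I E).
Local Notation opp := (@pa_opp k I E).
Local Notation tsum := (tsum zero add).
Local Notation wend := (walk_end tgt).
Local Notation walk := (is_walk src tgt).
Local Notation reach := (reach src tgt).
Local Notation kD := (@in_kD k I E src tgt).
Local Notation Asub i j := (@A_sub k I E src tgt i j).
Local Notation gmul := (pa_gmul tgt).
Local Open Scope ring_scope.

Lemma pa_ext (f g : T) : (forall v l, f v l = g v l) -> f = g.
Proof. by move=> H; apply: funext => v; apply: funext => l; exact: H. Qed.

Lemma pa_neq0 (f : T) : f <> zero -> exists v l, f v l <> 0.
Proof.
move=> H; apply: NNPP => C; apply: H; apply: pa_ext => v l.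
by apply: NNPP => D; apply: C; exists v, l.
Qed.

Lemma pa_mulA (f g h : T) : mul (mul f g) h = mul f (mul g h).
Proof.
apply: pa_ext => v l; rewrite /pa_mul.
set n := size l.
pose F (s t : nat) := f v (take s l) * g (wend v (take s l)) (take (t - s) (drop s l))
         * h (wend v (take t l)) (drop t l).
transitivity (\sum_(t < n.+1) \sum_(s < n.+1) (if (s <= t)%N then F s t else 0)).
  apply: eq_bigr => t _.
  have tn : (t <= n)%N by rewrite -ltnS.
  rewrite size_takel // mulr_suml.
  rewrite (big_ord_widen n.+1 (fun s : nat => f v (take s (take t l)) *
     g (wend v (take s (take t l))) (drop s (take t l)) * h (wend v (take t l)) (drop t l))) //.
  rewrite big_mkcond; apply: eq_bigr => s _; rewrite ltnS.
  by case: ifP => // st; rewrite /F take_takel // take_drop subnK.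
rewrite exchange_big; apply: eq_bigr => s _.
have sn : (s <= n)%N by rewrite -ltnS.
rewrite size_drop -/n (big_ord_shift (fun m => g (wend v (take s l)) (take m (drop s l)) *
     h (wend (wend v (take s l)) (take m (drop s l))) (drop m (drop s l))) sn).
rewrite mulr_sumr; apply: eq_bigr => t _.
case: ifP => st; last by rewrite mulr0.
by rewrite /F mulrA -walk_end_cat -takeD subnKC // drop_drop subnK.
Qed.

Lemma pa_mulDl (f g h : T) : mul (add f g) h = add (mul f h) (mul g h).
Proof.
by apply: pa_ext => v l; rewrite /pa_mul /pa_add -big_split; apply: eq_bigr => t _; exact: mulrDl.
Qed.

Lemma pa_mulDr (f g h : T) : mul f (add g h) = add (mul f g) (mul f h).
Proof.
by apply: pa_ext => v l; rewrite /pa_mul /pa_add -big_split; apply: eq_bigr => t _; exact: mulrDr.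
Qed.

Lemma pa_mul0l (f : T) : mul zero f = zero.
Proof. by apply: pa_ext => v l; rewrite /pa_mul /pa_zero; apply: big1 => t _; exact: mul0r. Qed.

Lemma pa_mul0r (f : T) : mul f zero = zero.
Proof. by apply: pa_ext => v l; rewrite /pa_mul /pa_zero; apply: big1 => t _; exact: mulr0. Qed.

Lemma pa_mulNl (f g : T) : mul (opp f) g = opp (mul f g).
Proof.
by apply: pa_ext => v l; rewrite /pa_mul /pa_opp -sumrN; apply: eq_bigr => t _; exact: mulNr.
Qed.

Lemma pa_mulNr (f g : T) : mul f (opp g) = opp (mul f g).
Proof.
by apply: pa_ext => v l; rewrite /pa_mul /pa_opp -sumrN; apply: eq_bigr => t _; exact: mulrN.
Qed.

Lemma pa_add0 (f : T) : add zero f = f.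
Proof. by apply: pa_ext => v l; rewrite /pa_add /pa_zero add0r. Qed.

Lemma pa_addr0 (f : T) : add f zero = f.
Proof. by apply: pa_ext => v l; rewrite /pa_add /pa_zero addr0. Qed.

Lemma pa_mul_suml (X : Type) (F : X -> T) (s : seq X) (h : T) :
  mul (tsum (map F s)) h = tsum (map (fun x => mul (F x) h) s).
Proof. by elim: s => [|x s IH] /=; [exact: pa_mul0l|rewrite pa_mulDl IH]. Qed.

Lemma pa_mul_sumr (X : Type) (F : X -> T) (s : seq X) (h : T) :
  mul h (tsum (map F s)) = tsum (map (fun x => mul h (F x)) s).
Proof. by elim: s => [|x s IH] /=; [exact: pa_mul0r|rewrite pa_mulDr IH]. Qed.

Lemma pa_sum_eq0 (s : seq T) : (forall y, List.In y s -> y = zero) -> tsum s = zero.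
Proof.
elim: s => [|y s IH] H //=; rewrite (H y (or_introl erefl)) pa_add0.
by apply: IH => z Hz; apply: H; right.
Qed.

Lemma pa_sum_filter (X : Type) (P : pred X) (F : X -> T) s :
  tsum (map F s) = add (tsum (map F (filter P s))) (tsum (map F (filter (predC P) s))).
Proof.
elim: s => [|x s IH] /=; first by rewrite pa_addr0.
case: ifP => Px /=; rewrite IH; apply: pa_ext => v l; rewrite /pa_add.
  exact: addrA.
exact: addrCA.
Qed.

Lemma pa_mul_neq0 (f g : T) v l : mul f g v l <> 0 ->
  exists t, (t <= size l)%N /\ f v (take t l) <> 0 /\ g (wend v (take t l)) (drop t l) <> 0.
Proof.
move=> H; apply: NNPP => C; apply: H; rewrite /pa_mul; apply: big1 => [[t Ht]] _ /=.
apply: NNPP => D; apply: C; exists t; split; first by rewrite -ltnS.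
by split => Z; apply: D; rewrite Z ?mul0r ?mulr0.
Qed.

(** * Monomials, supports and leading paths *)

Definition pmon (c : k) (v : I) (l : seq E) : T :=
  fun w m => if pselect (w = v /\ m = l) then c else 0.

Lemma pmon_at c v l : pmon c v l v l = c.
Proof. by rewrite /pmon; case: pselect => // -[]. Qed.

Lemma pmon_neq0 c v l w m : pmon c v l w m <> 0 -> w = v /\ m = l.
Proof. by rewrite /pmon; case: pselect. Qed.

Lemma pmon1_neq0 v l : pmon 1 v l <> zero.
Proof. by move=> Z; have := pmon_at 1 v l; rewrite Z /pa_zero => /eqP; rewrite eq_sym oner_eq0. Qed.

Lemma pmon1_mull u f w m : mul (pmon 1 u [::]) f w m = pmon 1 u [::] w [::] * f w m.
Proof.
rewrite /pa_mul big_ord_recl /= take0 drop0 big1 ?addr0 // => -[i Hi] _ /=.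
suff -> : pmon 1 u [::] w (take i.+1 m) = 0 by rewrite mul0r.
apply: NNPP => /pmon_neq0 [_ E1].
by have := size_takel Hi; rewrite E1.
Qed.

Lemma pmon1_mulr u f w m : mul f (pmon 1 u [::]) w m = f w m * pmon 1 u [::] (wend w m) [::].
Proof.
rewrite /pa_mul big_ord_recr /= take_size drop_size big1 ?add0r // => -[i Hi] _ /=.
suff -> : pmon 1 u [::] (wend w (take i m)) (drop i m) = 0 by rewrite mulr0.
apply: NNPP => /pmon_neq0 [_ E1].
by have := size_drop i m; rewrite E1 /=; lia.
Qed.

Definition supp_in (Q : I -> seq E -> Prop) (f : T) :=
  kD f /\ forall w m, f w m <> 0 -> Q w m.

Lemma in_kD_walk f v l : kD f -> f v l <> 0 -> walk v l.
Proof. by move=> [Wf _] H; apply: NNPP => C; apply: H; exact: Wf. Qed.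

Lemma in_kD_pmon c v l : walk v l -> kD (pmon c v l).
Proof.
move=> W; split.
  by move=> w m Hw; apply: NNPP => /pmon_neq0 [E1 E2]; apply: Hw; rewrite E1 E2.
by exists [:: (v, l)] => w m /pmon_neq0 [-> ->]; left.
Qed.

Lemma in_kD_mul f g : kD f -> kD g -> kD (mul f g).
Proof.
move=> Kf Kg; have [_ [sf Sf]] := Kf; have [_ [sg Sg]] := Kg; split.
  move=> v l Hw; apply: NNPP => /pa_mul_neq0 [t [_ [Hf Hg]]]; apply: Hw.
  rewrite -(cat_take_drop t l); apply/is_walk_cat.
  by split; [exact: in_kD_walk Hf|exact: in_kD_walk Hg].
exists (List.flat_map (fun p => List.map (fun q => (p.1, p.2 ++ q.2)) sg) sf).
move=> v l /pa_mul_neq0 [t [_ [Hf Hg]]]; apply/List.in_flat_map.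
exists (v, take t l); split; first exact: Sf.
apply/List.in_map_iff; exists (wend v (take t l), drop t l); split; last exact: Sg.
by rewrite /= cat_take_drop.
Qed.

Lemma in_kD_unit v : kD (pmon 1 v [::]).
Proof. exact: in_kD_pmon. Qed.

Lemma supp_in_pmon (Q : I -> seq E -> Prop) c v l : walk v l -> Q v l -> supp_in Q (pmon c v l).
Proof. by move=> W Hq; split=> [|w m /pmon_neq0 [-> ->]] //; exact: in_kD_pmon. Qed.

Lemma supp_in_subgroup Q : r_subgroup kD zero add opp (supp_in Q).
Proof.
split; first by move=> f [].
split.
  split; last by move=> v l; rewrite /pa_zero.
  by split => //; exists [::] => v l; rewrite /pa_zero.
split.
  move=> f g [[Wf [sf Sf]] Qf] [[Wg [sg Sg]] Qg]; split; first split.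
  - by move=> v l Hw; rewrite /pa_add Wf // Wg // addr0.
  - exists (sf ++ sg) => v l H; apply: List.in_or_app.
    case: (classic (f v l = 0)) => Hf; last by left; exact: Sf.
    by right; apply: Sg => Hg; apply: H; rewrite /pa_add Hf Hg addr0.
  - move=> w m H; case: (classic (f w m = 0)) => Hf; last exact: Qf.
    by apply: Qg => Hg; apply: H; rewrite /pa_add Hf Hg addr0.
move=> f [[Wf [sf Sf]] Qf]; split; first split.
- by move=> v l Hw; rewrite /pa_opp Wf // oppr0.
- by exists sf => v l H; apply: Sf => Z; apply: H; rewrite /pa_opp Z oppr0.
- by move=> w m H; apply: Qf => Z; apply: H; rewrite /pa_opp Z oppr0.
Qed.

Lemma supp_inZ Q c f : supp_in Q f -> supp_in Q (pa_scal c f).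
Proof.
move=> [[Wf [sf Sf]] Qf]; split; first split.
- by move=> v l Hw; rewrite /pa_scal Wf // mulr0.
- by exists sf => v l H; apply: Sf => Z; apply: H; rewrite /pa_scal Z mulr0.
- by move=> w m H; apply: Qf => Z; apply: H; rewrite /pa_scal Z mulr0.
Qed.

Lemma supp_in_ideal (Q : I -> seq E -> Prop) :
  (forall w m m', Q w m -> walk (wend w m) m' -> Q w (m ++ m')) ->
  (forall w m m', walk w m -> Q (wend w m) m' -> Q w (m ++ m')) ->
  r_ideal kD zero add opp mul (supp_in Q).
Proof.
move=> QR QL; split; first split; first exact: supp_in_subgroup.
- move=> f a [Kf Qf] Ka; split; first exact: in_kD_mul.
  move=> w m /pa_mul_neq0 [t [_ [Hf Ha]]]; rewrite -(cat_take_drop t m).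
  by apply: QR; [exact: Qf|exact: in_kD_walk Ha].
- move=> f a [Kf Qf] Ka; split; first exact: in_kD_mul.
  move=> w m /pa_mul_neq0 [t [_ [Ha Hf]]]; rewrite -(cat_take_drop t m).
  by apply: QL; [exact: in_kD_walk Ha|exact: Qf].
Qed.

Lemma A_sub_mul i j l f g : Asub i j f -> Asub j l g -> Asub i l (mul f g).
Proof.
move=> [Kf Sf] [Kg Sg]; split; first exact: in_kD_mul.
move=> v m /pa_mul_neq0 [t [_ [Hf Hg]]]; have [-> E1] := Sf _ _ Hf.
have [E2 E3] := Sg _ _ Hg; split => //.
by rewrite -(cat_take_drop t m) walk_end_cat E1 -E3 E2.
Qed.

Lemma A_sub_sum i j s : (forall f, List.In f s -> Asub i j f) -> Asub i j (tsum s).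
Proof.
have [_ [H0 [HD _]]] := supp_in_subgroup (fun v l => v = i /\ wend v l = j).
elim: s => [|f s IH] H /=; first exact: H0.
by apply: HD; [apply: H; left|apply: IH => g Hg; apply: H; right].
Qed.

Lemma A_sub_pmon i j c q : walk j q -> wend j q = i -> Asub j i (pmon c j q).
Proof. by move=> Wq Eq; exact: (@supp_in_pmon (fun v l => v = j /\ wend v l = i)). Qed.

Lemma pa_monomial_sum f (sl : seq (I * seq E)) :
  (forall v l, f v l <> 0 -> List.In (v, l) sl) ->
  exists s : seq (k * (I * seq E)), (forall p, List.In p s -> f p.2.1 p.2.2 <> 0) /\
    f = tsum (map (fun p => pmon p.1 p.2.1 p.2.2) s).
Proof.
elim: sl f => [|p0 sl IH] f Hf.
  by exists [::]; split => //; apply: pa_ext => v l; apply: NNPP => /Hf.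
set g := add f (pmon (- f p0.1 p0.2) p0.1 p0.2).
have gE w m : g w m = if pselect (w = p0.1 /\ m = p0.2) then 0 else f w m.
  rewrite /g /pa_add /pmon; case: pselect => [[Ew Em]|_] /=; last by rewrite addr0.
  by rewrite Ew Em subrr.
have [s [Hs Eg]] : exists s : seq (k * (I * seq E)),
    (forall p, List.In p s -> g p.2.1 p.2.2 <> 0) /\
    g = tsum (map (fun p => pmon p.1 p.2.1 p.2.2) s).
  apply: IH => w m; rewrite gE; case: pselect => // Np /Hf [Ep|] //.
  by case: Np; rewrite Ep.
have gf p : g p.2.1 p.2.2 <> 0 -> f p.2.1 p.2.2 <> 0.
  by rewrite gE; case: pselect.
have fE : f = add (pmon (f p0.1 p0.2) p0.1 p0.2) g.
  by apply: pa_ext => w m; rewrite /g /pa_add /pmon; case: pselect => [a|a] /=; ring.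
case: (classic (f p0.1 p0.2 = 0)) => [F0|F0].
  exists s; split; first by move=> p /Hs /gf.
  rewrite fE -Eg F0; apply: pa_ext => w m; rewrite /pa_add /pmon.
  by case: pselect => [a|a] /=; ring.
exists ((f p0.1 p0.2, p0) :: s); split; last by rewrite /= -Eg.
by move=> p [<-|/Hs /gf].
Qed.

Definition lead_path (f : T) v l := f v l <> 0 /\ forall w m, f w m <> 0 -> (size m <= size l)%N.

Lemma lead_path_neq0 (f : T) v l : lead_path f v l -> f <> zero.
Proof. by move=> [H _] Z; apply: H; rewrite Z. Qed.

Lemma exists_lead_path f : kD f -> f <> zero -> exists v l, lead_path f v l.
Proof.
move=> [_ [s Ss]] /pa_neq0 [v0 [l0 H0]].
pose P n := `[< exists v l, f v l <> 0 /\ size l = n >].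
have exP : exists n, P n by exists (size l0); apply/asboolP; exists v0, l0.
have in_bound p : List.In p s -> (size p.2 <= sumn (map (fun q => size q.2) s))%N.
  elim: s {Ss} => [|q s IH] //= [<-|/IH Hp]; [exact: leq_addr|exact: leq_trans Hp (leq_addl _ _)].
have bound n : P n -> (n <= sumn (map (fun q => size q.2) s))%N.
  by move=> /asboolP [v [l [Hvl <-]]]; exact: (in_bound (v, l) (Ss _ _ Hvl)).
case: (ex_maxnP exP bound) => n /asboolP [v [l [Hvl Hn]]] Hmax.
exists v, l; split => // w m Hwm; rewrite Hn; apply: Hmax; apply/asboolP; by exists w, m.
Qed.

Lemma lead_coef_mul f g v l1 l2 : lead_path f v l1 -> lead_path g (wend v l1) l2 ->
  mul f g v (l1 ++ l2) = f v l1 * g (wend v l1) l2.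
Proof.
move=> [_ bf] [_ bg]; rewrite /pa_mul.
have Hi : (size l1 < (size (l1 ++ l2)).+1)%N by rewrite size_cat ltnS leq_addr.
rewrite (bigD1 (Ordinal Hi)) //= take_size_cat // drop_size_cat // big1 ?addr0 //.
move=> [t Ht] /= /eqP Hne; have {}Hne : t <> size l1 by move=> E1; apply: Hne; exact: val_inj.
case: (ltngtP t (size l1)) => Ht1 //.
- suff -> : g (wend v (take t (l1 ++ l2))) (drop t (l1 ++ l2)) = 0 by rewrite mulr0.
  by apply: NNPP => C; have := bg _ _ C; rewrite size_drop size_cat; lia.
- suff -> : f v (take t (l1 ++ l2)) = 0 by rewrite mul0r.
  by apply: NNPP => C; have := bf _ _ C; rewrite size_takel; lia.
Qed.

Lemma lead_path_mul f g v l1 u l2 : lead_path f v l1 -> wend v l1 = u -> lead_path g u l2 ->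
  lead_path (mul f g) v (l1 ++ l2).
Proof.
move=> Lf <- Lg; have [[nf bf] [ng bg]] := (Lf, Lg); split.
  by rewrite lead_coef_mul //; apply/eqP; apply: mulf_neq0; apply/eqP.
move=> w m /pa_mul_neq0 [t [Ht [Hf Hg]]].
by have := bf _ _ Hf; have := bg _ _ Hg; rewrite size_cat size_drop size_takel //; lia.
Qed.

Lemma lead_path_pmon c v l : c != 0 -> lead_path (pmon c v l) v l.
Proof. by move=> /eqP Hc; rewrite /lead_path pmon_at; split => // w m /pmon_neq0 [_ ->]. Qed.

Lemma lead_path_opp f v l : lead_path f v l -> lead_path (opp f) v l.
Proof.
move=> [H B]; split; first by rewrite /pa_opp => /eqP; rewrite oppr_eq0 => /eqP.
by move=> w m Hn; apply: (B w) => Z; apply: Hn; rewrite /pa_opp Z oppr0.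
Qed.

Lemma A_sub_mul_eq0 h i j u x : Asub h i u -> Asub i j x -> mul u x = zero ->
  u = zero \/ x = zero.
Proof.
move=> Au Ax Eux; apply: NNPP => /not_or_and [/(exists_lead_path (proj1 Au)) [w [L1 Lu]]].
move=> /(exists_lead_path (proj1 Ax)) [w' [L2 Lx]].
have [_ E1] := proj2 Au _ _ (proj1 Lu); have [E2 _] := proj2 Ax _ _ (proj1 Lx).
by apply: (lead_path_neq0 (lead_path_mul Lu (etrans E1 (esym E2)) Lx)).
Qed.

Definition ends_at (f : T) v := forall w m, f w m <> 0 -> wend w m = v.

Lemma ends_at_mul f g v : ends_at g v -> ends_at (mul f g) v.
Proof.
move=> H w m /pa_mul_neq0 [t [_ [_ Hg]]].
by rewrite -(cat_take_drop t m) walk_end_cat; exact: H Hg.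
Qed.

Lemma ends_at_pmon c v l : ends_at (pmon c v l) (wend v l).
Proof. by move=> w m /pmon_neq0 [-> ->]. Qed.

Lemma pa_mul_unitr f v : ends_at f v -> mul f (pmon 1 v [::]) = f.
Proof.
move=> H; apply: pa_ext => w m; rewrite pmon1_mulr.
case: (classic (f w m = 0)) => [->|Hf]; first by rewrite mul0r.
by rewrite (H _ _ Hf) pmon_at mulr1.
Qed.

Lemma A_sub_corner i j f : kD f -> Asub i j (mul (mul (pmon 1 i [::]) f) (pmon 1 j [::])).
Proof.
move=> Kf; split; first by do 2?apply: in_kD_mul => //; exact: in_kD_unit.
move=> w m; rewrite pmon1_mulr pmon1_mull => H.
have [H1 H2] : pmon 1 i [::] w [::] <> 0 /\ pmon 1 j [::] (wend w m) [::] <> 0.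
  by split => Z; apply: H; rewrite Z ?mul0r ?mulr0.
by split; [case: (pmon_neq0 H1)|case: (pmon_neq0 H2)].
Qed.

Lemma lead_path_corner f w m : kD f -> f w m <> 0 ->
  exists L, lead_path (mul (pmon 1 w [::]) f) w L.
Proof.
move=> Kf Hf; have Kg : kD (mul (pmon 1 w [::]) f) by apply: in_kD_mul => //; exact: in_kD_unit.
have Hg : mul (pmon 1 w [::]) f <> zero.
  by move=> Z; have := f_equal (fun g => g w m) Z; rewrite pmon1_mull pmon_at mul1r.
have [w' [L Lg]] := exists_lead_path Kg Hg; exists L.
have [H1 _] := Lg; move: H1; rewrite pmon1_mull => H1.
have [Ew _] : w' = w /\ [::] = [::] :> seq E.
  by apply: (@pmon_neq0 1) => Z; apply: H1; rewrite Z mul0r.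
by rewrite -Ew in Lg *.
Qed.

Lemma lead_path_rprod y v L : lead_path y v L -> wend v L = v ->
  forall n, exists L', lead_path (rprod mul y (nseq n y)) v L'.
Proof.
move=> Ly Ey; elim => [|n [L' IH]] /=; first by exists L.
by exists (L ++ L'); exact: lead_path_mul Ly Ey IH.
Qed.

(* With [M] the leading path of [c], the coefficient of [L ++ M] in [a c] is
   [- c v M] and nothing else in [a + c + a c] reaches that length; the value [-1]
   is needed only when [L] is empty. *)
Lemma A_sub_not_rqr a c v L : Asub v v a -> Asub v v c -> lead_path a v L -> a v L = -1 ->
  add (add a c) (mul a c) <> zero.
Proof.
move=> [Ka Sa] [Kc Sc] La Av Eq.
have pt w m : a w m + c w m + mul a c w m = 0.
  by have := f_equal (fun F => F w m) Eq; rewrite /pa_add /pa_zero.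
have WL : wend v L = v by case: (Sa v L (proj1 La)).
have neg1 : (-1 : k) <> 0 by apply/eqP; rewrite oppr_eq0 oner_eq0.
have p0 := pt v [::]; rewrite /pa_mul big_ord1 /= in p0.
have L0 : (0 < size L)%N.
  by case: L La Av WL => // La Av _; case: neg1; rewrite -p0 Av; ring.
have Cnz : c <> zero.
  by move=> Cz; apply: neg1; rewrite -(pt v L) Cz pa_mul0r /pa_zero Av; ring.
have [w [M Lc]] := exists_lead_path Kc Cnz.
have [Ew _] := Sc w M (proj1 Lc); subst w.
have Vm : mul a c v (L ++ M) = - c v M by rewrite lead_coef_mul ?WL // Av mulN1r.
have cLM : c v (L ++ M) = 0.
  by apply: NNPP => C; have := (proj2 Lc) _ _ C; rewrite size_cat; lia.
have := pt v (L ++ M); rewrite cLM Vm addr0.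
case: (posnP (size M)) => [/size0nil M0|M0].
  rewrite M0 cats0 Av => H1; apply: neg1.
  have c0 : c v [::] = -1 by rewrite -[LHS]addr0 -H1; ring.
  by rewrite -p0 c0; ring.
have -> : a v (L ++ M) = 0.
  by apply: NNPP => C; have := (proj2 La) _ _ C; rewrite size_cat; lia.
by rewrite add0r => /eqP; rewrite oppr_eq0 => /eqP; case: Lc.
Qed.

(** * Symmetric reachability *)

Lemma supp_in_witness Q f : kD f -> ~ supp_in Q f -> exists w m, f w m <> 0 /\ ~ Q w m.
Proof.
move=> Kf NQ; apply: NNPP => C; apply: NQ; split => // w m Hf.
by apply: NNPP => NQw; apply: C; exists w, m.
Qed.

(* Indexed by the reachability class [C] itself, so that distinct summands of the
   decomposition of kD carry distinct indices. *)
Definition component_part (C : I -> Prop) := supp_in (fun w (_ : seq E) => C = reach w).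

Section ReachSymmetric.
Hypothesis reach_symmetric : reach_sym src tgt.

Lemma reach_sym_class u w : reach u w -> reach u = reach w.
Proof.
move=> R; apply: funext => z; apply: propext.
by split => H; [exact: reach_trans (reach_symmetric R) H|exact: reach_trans R H].
Qed.

Lemma return_walk f v l : kD f -> f v l <> 0 ->
  exists q, walk (wend v l) q /\ wend (wend v l) q = v.
Proof. by move=> Kf Hf; apply/reach_walk/reach_symmetric/reach_walk_end/(in_kD_walk Kf Hf). Qed.

Lemma lead_cycle c x v l : c != 0 -> kD x -> lead_path x v l ->
  exists q, walk (wend v l) q /\ wend v (l ++ q) = v /\
    lead_path (mul x (pmon c (wend v l) q)) v (l ++ q) /\
    mul x (pmon c (wend v l) q) v (l ++ q) = x v l * c.
Proof.
move=> cnz Kx Lx; have [q [Wq Eq]] := return_walk Kx (proj1 Lx).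
have Lq := lead_path_pmon (wend v l) q cnz.
exists q; rewrite walk_end_cat; do 2!split => //.
by split; [exact: lead_path_mul Lx erefl Lq|rewrite lead_coef_mul // pmon_at].
Qed.

Lemma semiprime_of_reach_sym : r_semiprime kD zero mul.
Proof.
move=> x Kx H; apply: NNPP => /(exists_lead_path Kx) [v [l Lx]].
have [q [Wq [Eq [Ly _]]]] := lead_cycle (oner_neq0 k) Kx Lx.
by apply: (lead_path_neq0 (lead_path_mul Ly Eq Lx)); apply: H; exact: in_kD_pmon.
Qed.

Lemma nil_zero_of_reach_sym : r_nil_zero kD zero add opp mul.
Proof.
move=> U [[[SU _] RU] _] Nil x Ux; apply: NNPP => /(exists_lead_path (SU x Ux)) [v [l Lx]].
have [q [Wq [Eq [Ly _]]]] := lead_cycle (oner_neq0 k) (SU x Ux) Lx.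
have [n Hn] := Nil _ (RU _ _ Ux (in_kD_pmon 1 Wq)).
have [L' Ln] := lead_path_rprod Ly Eq n.
apply: (lead_path_neq0 Ln); apply: Hn; [by left|by rewrite size_nseq|].
by move=> z; elim: (n) => [|n' IH] //= [<-|/IH]; [left|].
Qed.

Lemma jacobson_zero_of_reach_sym : r_jacobson_zero kD zero add opp mul.
Proof.
move=> U [[SU _] RU] Rq x Ux; apply: NNPP => /(exists_lead_path (SU x Ux)) [v [l Lx]].
have xnz : x v l != 0 by apply/eqP; case: Lx.
have cnz : - (x v l)^-1 != 0 by rewrite oppr_eq0 invr_eq0.
have [q [Wq [Eq [Ly Cy]]]] := lead_cycle cnz (SU x Ux) Lx.
set y := mul x _ in Ly Cy.
have Uy : U y by apply: RU Ux (in_kD_pmon _ Wq).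
have [z [Kz Ez]] := Rq y Uy.
set ev := pmon 1 v [::].
have yev : mul y ev = y.
  apply/pa_mul_unitr/ends_at_mul; rewrite -[X in ends_at _ X]Eq walk_end_cat.
  exact: ends_at_pmon.
have Lev := lead_path_pmon v [::] (oner_neq0 k).
have Ly' : lead_path (mul (mul ev y) ev) v (l ++ q).
  by rewrite pa_mulA yev; exact: (lead_path_mul Lev erefl Ly).
apply: (A_sub_not_rqr (A_sub_corner v v (SU _ Uy)) (A_sub_corner v v Kz) Ly').
  by rewrite pa_mulA yev (lead_coef_mul Lev Ly) pmon_at mul1r Cy mulrN mulfV.
have : mul (mul ev (add (add y z) (mul y z))) ev = mul (mul ev zero) ev by rewrite Ez.
rewrite pa_mul0r pa_mul0l !pa_mulDr !pa_mulDl => <-; congr add.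
by rewrite [mul (mul ev y) ev]pa_mulA yev -pa_mulA (pa_mulA ev y) -(pa_mulA y ev) yev.
Qed.

Lemma baer_zero_of_reach_sym : r_baer_zero kD zero add opp mul.
Proof.
move=> x Kx Hall; apply: NNPP => /pa_neq0 [i0 [l0 Hx0]].
pose P := supp_in (fun w _ => ~ reach w i0).
have IP : r_ideal kD zero add opp mul P.
  apply: supp_in_ideal => // w m m' Wm Nr R; apply: Nr.
  exact: reach_trans (reach_symmetric (reach_walk_end Wm)) R.
have NPx : ~ P x by move=> [_ Px]; apply: (Px _ _ Hx0); exact: rt_refl.
suff /Hall Px : r_prime_ideal kD zero add opp mul P by [].
split => //; split; first by exists x.
move=> U V [[[SU _] RU] LU] [[[SV _] _] LV] UV; apply: NNPP => /not_or_and [NU NV].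
have outside W : (forall f, W f -> kD f) -> ~ (forall f, W f -> P f) ->
    exists f w m, W f /\ f w m <> 0 /\ reach w i0.
  move=> SW NW; apply: NNPP => C; apply: NW => f Wf.
  apply: NNPP => /(supp_in_witness (SW f Wf)) [w [m [Hf Hr]]].
  by apply: C; exists f, w, m; split => //; split => //; exact: NNPP.
have [u [w1 [m1 [Uu [Hu R1]]]]] := outside U SU NU.
have [v [w2 [m2 [Vv [Hv R2]]]]] := outside V SV NV.
have [L1 Lu] := lead_path_corner (SU _ Uu) Hu.
have [L2 Lv] := lead_path_corner (SV _ Vv) Hv.
set u' := mul _ u in Lu; set v' := mul _ v in Lv.
have Uu' : U u' by apply: LU Uu (in_kD_unit w1).
have Vv' : V v' by apply: LV Vv (in_kD_unit w2).
have back := reach_symmetric (reach_walk_end (in_kD_walk (SU _ Uu') (proj1 Lu))).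
have R12 := reach_trans back (reach_trans R1 (reach_symmetric R2)).
have [q [Wq Eq]] := (reach_walk src tgt _ _).1 R12.
have Luq := lead_path_mul Lu erefl (lead_path_pmon (wend w1 L1) q (oner_neq0 k)).
have Luqv := lead_path_mul Luq (etrans (walk_end_cat _ _ _ _) Eq) Lv.
have [_ PP] := UV _ _ (RU _ _ Uu' (in_kD_pmon 1 Wq)) Vv'.
exact: PP _ _ (proj1 Luqv) R1.
Qed.

Lemma A_sub_lead_cycle i j x : Asub i j x -> x <> zero ->
  exists l q, lead_path x i l /\ wend i l = j /\ walk j q /\ wend j q = i.
Proof.
move=> Ax Nx; have [v [l Lx]] := exists_lead_path (proj1 Ax) Nx.
have [Ev El] := proj2 Ax _ _ (proj1 Lx); subst v.
have [q [Wq Eq]] := return_walk (proj1 Ax) (proj1 Lx).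
by exists l, q; rewrite -El.
Qed.

Lemma g_semiprime_of_reach_sym i j : g_semiprime (Asub i j) (Asub j i) zero gmul.
Proof.
move=> x Ax H; apply: NNPP => /(A_sub_lead_cycle Ax) [l [q [Lx [El [Wq Eq]]]]].
have Lq := lead_path_pmon j q (oner_neq0 k).
have L1 := lead_path_mul Lx El Lq.
have L2 := lead_path_mul L1 (_ : _ = i) Lx.
have L3 := lead_path_mul (L2 ltac:(by rewrite walk_end_cat El)) (_ : _ = j) Lq.
have L4 := lead_path_mul (L3 ltac:(by rewrite !walk_end_cat El Eq)) (_ : _ = i) Lx.
apply: (lead_path_neq0 (L4 ltac:(by rewrite !walk_end_cat El Eq El))).
by apply: H; [exact: A_sub_pmon|exact: Ax|exact: A_sub_pmon].
Qed.

Lemma lead_path_gprod x q i j l : lead_path x i l -> wend i l = j -> wend j q = i ->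
  forall n, exists L, lead_path (gprod gmul x (nseq n (pmon 1 j q, x))) i L /\ wend i L = j.
Proof.
move=> Lx El Eq; elim => [|n [L [LL EL]]] /=; first by exists l.
have Lxq := lead_path_mul Lx El (lead_path_pmon j q (oner_neq0 k)).
exists ((l ++ q) ++ L); split; last by rewrite !walk_end_cat El Eq EL.
by apply: lead_path_mul Lxq _ LL; rewrite walk_end_cat El Eq.
Qed.

Lemma g_nil_zero_of_reach_sym i j : g_nil_zero (Asub i j) (Asub j i) zero add opp gmul.
Proof.
move=> U [[[SU _] _] _] Nil x Ux; apply: NNPP.
move=> /(A_sub_lead_cycle (SU x Ux)) [l [q [Lx [El [Wq Eq]]]]].
have [n Hn] := Nil _ Ux.
have [L [LL _]] := lead_path_gprod Lx El Eq n.
apply: (lead_path_neq0 LL); apply: Hn; [by left|by rewrite size_nseq|].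
move=> p; elim: (n) => [|n' IH] //= [<-|/IH //]; split; [exact: A_sub_pmon|by left].
Qed.

Lemma g_baer_zero_of_reach_sym i j : g_baer_zero (Asub i j) (Asub j i) zero add opp gmul.
Proof.
move=> x Ax Hall; apply: NNPP => Nx.
suff P0 : g_prime_ideal (Asub i j) (Asub j i) zero add opp gmul (fun f => f = zero).
  exact: Nx (Hall _ P0).
have [_ [S0 _]] := supp_in_subgroup (fun v l => v = i /\ wend v l = j).
split; first split; first split.
- split; first by move=> f ->; exact: S0.
  split => //; split; first by move=> f g -> ->; exact: pa_add0.
  by move=> f ->; apply: pa_ext => v l; rewrite /pa_opp /pa_zero oppr0.
- by move=> f g a -> _ _; rewrite /pa_gmul !pa_mul0l.
- by move=> f g a -> _ _; rewrite /pa_gmul pa_mul0r.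
split; first by exists x.
move=> U V [[[SU _] _] _] [[[SV _] _] _] H; apply: NNPP => /not_or_and [NU NV].
have nonzero W : ~ (forall f, W f -> f = zero) -> exists f, W f /\ f <> zero.
  by move=> NW; apply: NNPP => C; apply: NW => f Wf; apply: NNPP => Nf; apply: C; exists f.
have [u [Uu Nu]] := nonzero U NU; have [v [Vv Nv]] := nonzero V NV.
have [l [q [Lu [El [Wq Eq]]]]] := A_sub_lead_cycle (SU _ Uu) Nu.
have [w [lv Lv]] := exists_lead_path (proj1 (SV _ Vv)) Nv.
have [Ew _] := proj2 (SV _ Vv) _ _ (proj1 Lv); subst w.
have L1 := lead_path_mul Lu El (lead_path_pmon j q (oner_neq0 k)).
have L2 := lead_path_mul L1 (_ : _ = i) Lv.
apply: (lead_path_neq0 (L2 ltac:(by rewrite walk_end_cat El Eq))).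
by apply: H; [|exact: A_sub_pmon|].
Qed.

Lemma g_jacobson_zero_of_reach_sym i j :
  g_jacobson_zero (Asub i j) (Asub j i) zero add opp gmul.
Proof.
move=> U [[SU _] _] Rq x Ux; apply: NNPP => Nx.
have Ax := SU x Ux.
have [l [q [Lx [El [Wq Eq]]]]] := A_sub_lead_cycle Ax Nx.
have xnz : x i l != 0 by apply/eqP; case: Lx.
set g := pmon (x i l)^-1 j q.
have Ag : Asub j i g := A_sub_pmon _ Wq Eq.
have Lg : lead_path g (wend i l) q by rewrite El; exact/lead_path_pmon/invr_neq0.
set a := mul x g.
have La : lead_path a i (l ++ q) := lead_path_mul Lx erefl Lg.
have a1 : a i (l ++ q) = 1 by rewrite /a (lead_coef_mul Lx Lg) /g El pmon_at mulfV.
have Aa : Asub i i a := A_sub_mul Ax Ag.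
have [s [Hs Eb]] := Rq x Ux g Ag.
set c := tsum (map (fun p => mul p.1 p.2) s).
have Ac : Asub i i c.
  apply: A_sub_sum => f /List.in_map_iff [p [<- Ip]].
  by have [H1 H2] := Hs p Ip; exact: A_sub_mul H2.
have [_ [_ [AD AN]]] := supp_in_subgroup (fun v l => v = i /\ wend v l = i).
have Eu : mul (add (add a c) (opp (mul a c))) x = zero.
  have Ec : mul c x = tsum (map (fun p => mul (mul p.1 p.2) x) s) by rewrite pa_mul_suml.
  have Eac : mul (mul a c) x = tsum (map (fun p => mul (mul (mul a p.1) p.2) x) s).
    rewrite pa_mul_sumr pa_mul_suml; apply: f_equal; apply: eq_map => p.
    by rewrite -(pa_mulA a p.1 p.2).
  by rewrite !pa_mulDl pa_mulNl Ec Eac; exact: Eb.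
have Au : Asub i i (add (add a c) (opp (mul a c))).
  exact: AD _ _ (AD _ _ Aa Ac) (AN _ (A_sub_mul Aa Ac)).
case: (A_sub_mul_eq0 Au Ax Eu) => // Uz.
apply: (A_sub_not_rqr (AN _ Aa) (AN _ Ac) (lead_path_opp La)); first by rewrite /pa_opp a1.
rewrite pa_mulNl pa_mulNr; apply: pa_ext => w m.
have := f_equal (fun F => F w m) Uz; rewrite /pa_add /pa_opp /pa_zero => H.
by rewrite -oppr0 -H; ring.
Qed.

Lemma component_part_ideal C : r_ideal kD zero add opp mul (component_part C).
Proof.
apply: supp_in_ideal => [w m m' //|w m m' Wm EC].
by rewrite EC (reach_sym_class (reach_walk_end Wm)).
Qed.

Lemma component_part_prime C : r_prime (component_part C) zero mul.
Proof.
move=> x y [Kx Px] [Ky Py] H; apply: NNPP => /not_or_and [].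
move=> /(exists_lead_path Kx) [w1 [L1 Lx]] /(exists_lead_path Ky) [w2 [L2 Ly]].
have E1 := Px _ _ (proj1 Lx); have E2 := Py _ _ (proj1 Ly).
have R1 : reach w1 (wend w1 L1) := reach_walk_end (in_kD_walk Kx (proj1 Lx)).
have R12 : reach w1 w2 by rewrite -E1 E2; exact: rt_refl.
have [q [Wq Eq]] := (reach_walk src tgt _ _).1 (reach_trans (reach_symmetric R1) R12).
have Cq : component_part C (pmon 1 (wend w1 L1) q).
  by apply: supp_in_pmon => //; rewrite E1; exact: reach_sym_class.
have Lxq := lead_path_mul Lx erefl (lead_path_pmon (wend w1 L1) q (oner_neq0 k)).
exact: lead_path_neq0 (lead_path_mul Lxq (etrans (walk_end_cat _ _ _ _) Eq) Ly) (H _ Cq).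
Qed.

Lemma direct_sum_of_primes_of_reach_sym : pa_direct_sum_of_primes k src tgt.
Proof.
exists (I -> Prop), component_part; split.
  by move=> C; split; [exact: component_part_ideal|move=> c x; exact: supp_inZ].
split; first exact: component_part_prime.
split.
  move=> x Kx; have [_ [sl Hsl]] := Kx.
  have [s [Hs Ex]] := pa_monomial_sum Hsl.
  exists (map (fun p => (reach p.2.1, pmon p.1 p.2.1 p.2.2)) s).
  split; last by rewrite -map_comp; exact: Ex.
  move=> _ /List.in_map_iff [p [<- Ip]]; apply: supp_in_pmon => //.
  exact: in_kD_walk Kx (Hs p Ip).
move=> C x s [Kx Px] Hs Ex; apply: pa_ext => w m; rewrite /pa_zero.
apply: NNPP => Hn; have EC := Px _ _ Hn; apply: Hn; rewrite Ex {Ex}.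
elim: s Hs => [|q s IH] Hs //=.
rewrite /pa_add IH ?addr0; last by move=> q' Iq; apply: Hs; right.
apply: NNPP => Hq; have [Nq [_ Pq]] := Hs q (or_introl erefl).
by apply: Nq; rewrite (Pq _ _ Hq) EC.
Qed.

End ReachSymmetric.

(** * A path without return *)

Definition through_ideal i j := supp_in (fun w m => reach w i /\ reach j (wend w m)).

Lemma through_ideal_ideal i j : r_ideal kD zero add opp mul (through_ideal i j).
Proof.
apply: supp_in_ideal => [w m m' [R1 R2] W|w m m' W [R1 R2]].
  by split => //; rewrite walk_end_cat; exact: reach_trans R2 (reach_walk_end W).
by rewrite walk_end_cat; split => //; exact: reach_trans (reach_walk_end W) R1.
Qed.

Lemma A_sub_eq0_iff i j : (forall f, Asub i j f -> f = zero) <-> ~ reach i j.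
Proof.
split.
  by move=> H /reach_walk [l [W El]]; apply: (@pmon1_neq0 i l); apply/H/A_sub_pmon.
move=> N f [Kf Sf]; apply: NNPP => /pa_neq0 [v [l H]]; apply: N.
by have [Ev El] := Sf _ _ H; rewrite -Ev -El; exact: reach_walk_end (in_kD_walk Kf H).
Qed.

Section NonReturningPath.
Variables (i j : I) (l0 : seq E).
Hypotheses (W0 : walk i l0) (E0 : wend i l0 = j) (Nji : ~ reach j i).

Lemma through_ideal_mul f g : through_ideal i j f -> through_ideal i j g -> mul f g = zero.
Proof.
move=> [_ Pf] [_ Pg]; apply: pa_ext => v l; apply: NNPP => /pa_mul_neq0 [t [_ [Hf Hg]]].
by have [_ R1] := Pf _ _ Hf; have [R2 _] := Pg _ _ Hg; apply: Nji; exact: reach_trans R1 R2.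
Qed.

Lemma through_ideal_path : through_ideal i j (pmon 1 i l0).
Proof. by apply: supp_in_pmon => //; rewrite E0; split; exact: rt_refl. Qed.

Lemma not_semiprime_of_nonreturning : ~ r_semiprime kD zero mul.
Proof.
move=> H; apply: (@pmon1_neq0 i l0); apply: H; first exact: (proj1 through_ideal_path).
move=> a Ka; apply: through_ideal_mul through_ideal_path.
by have [[_ RU] _] := through_ideal_ideal i j; exact: RU _ _ through_ideal_path Ka.
Qed.

Lemma not_radical_zero_of_nonreturning rk : ~ ring_radical_zero rk kD zero add opp mul.
Proof.
have IU := through_ideal_ideal i j; have [[[SU [_ [_ NU]]] RU] _] := IU.
have Px := through_ideal_path.
case: rk => /= H; apply: (@pmon1_neq0 i l0).
- apply: H; first exact: (proj1 Px).
  move=> P [[[[_ [PZ _]] _] _] [_ PP]].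
  have [] := PP _ _ IU IU (fun u v Uu Uv => eq_ind_r P PZ (through_ideal_mul Uu Uv)); exact.
- apply: (H _ IU) => // x Ux; exists 1%N => x' s [<-|[]] Hs Hin.
  case: s Hs Hin => [|y [|]] //= _ Hin.
  have -> : y = x by case: (Hin y (or_introl erefl)) => [<-|[]].
  exact: through_ideal_mul.
- apply: (H _ IU) => // F HF; exists 1%N => x' s Ix Hs Hin.
  case: s Hs Hin => [|y [|]] //= _ Hin.
  by apply: through_ideal_mul; [exact: HF|apply: HF; apply: Hin; left].
- apply: (H _ (proj1 IU)) => // x Ux; exists (opp x).
  split; first exact: SU _ (NU _ Ux).
  rewrite pa_mulNr (through_ideal_mul Ux Ux); apply: pa_ext => v l.
  by rewrite /pa_add /pa_opp /pa_zero subrr oppr0 addr0.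
Qed.

Lemma A_sub_reverse_eq0 g : Asub j i g -> g = zero.
Proof. exact: (A_sub_eq0_iff j i).2 Nji g. Qed.

Lemma gmul_reverse_eq0 x g y : Asub j i g -> gmul x g y = zero.
Proof. by move=> /A_sub_reverse_eq0 ->; rewrite /pa_gmul pa_mul0r pa_mul0l. Qed.

Lemma not_g_semiprime_of_nonreturning : ~ g_semiprime (Asub i j) (Asub j i) zero gmul.
Proof.
move=> H; apply: (@pmon1_neq0 i l0); apply: H; first exact: A_sub_pmon.
by move=> g a d _ _ Ad; rewrite /pa_gmul (A_sub_reverse_eq0 Ad) pa_mul0r pa_mul0l.
Qed.

Lemma not_g_radical_zero_of_nonreturning rk :
  ~ gamma_radical_zero rk (Asub i j) (Asub j i) zero add opp gmul.
Proof.
have [_ [M0 MDN]] := supp_in_subgroup (fun v l => v = i /\ wend v l = j).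
have IM : g_ideal (Asub i j) (Asub j i) zero add opp gmul (Asub i j).
  split; first split; first exact: (conj (fun x Ax => Ax) (conj M0 MDN)).
    by move=> x g a _ Ag _; rewrite gmul_reverse_eq0.
  by move=> x g a _ Ag _; rewrite gmul_reverse_eq0.
have Ax : Asub i j (pmon 1 i l0) by exact: A_sub_pmon.
case: rk => /= H; apply: (@pmon1_neq0 i l0).
- apply: H => // P [[[[_ [PZ _]] _] _] [_ PP]].
  have [] := PP _ _ IM IM (fun u g v _ Ag _ => eq_ind_r P PZ (gmul_reverse_eq0 u v Ag)); exact.
- apply: (H _ IM) => // x Ux; exists 1%N => x' s _ Hs Hin.
  case: s Hs Hin => [|[g y] [|]] //= _ Hin.
  by apply: gmul_reverse_eq0; case: (Hin _ (or_introl erefl)).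
- apply: (H _ IM) => // F HF; exists 1%N => x' s _ Hs Hin.
  case: s Hs Hin => [|[g y] [|]] //= _ Hin.
  by apply: gmul_reverse_eq0; case: (Hin _ (or_introl erefl)).
- apply: (H _ (proj1 IM)) => // x Ux g Ag; exists [::]; split => // b Ab /=.
  rewrite gmul_reverse_eq0 //; apply: pa_ext => v l.
  by rewrite /pa_add /pa_opp /pa_zero oppr0 !addr0.
Qed.

End NonReturningPath.

Section DirectSumOfPrimes.
Variables (J : Type) (B : J -> T -> Prop).
Hypothesis summand_ideal : forall j, r_ideal kD zero add opp mul (B j).
Hypothesis summand_prime : forall j, r_prime (B j) zero mul.
Hypothesis summand_indep : forall j x (s : seq (J * T)), B j x ->
  (forall p, List.In p s -> p.1 <> j /\ B p.1 p.2) -> x = tsum (map snd s) -> x = zero.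

Lemma summand_in_kD j f : B j f -> kD f.
Proof. by have [[[SB _] _] _] := summand_ideal j; exact: SB. Qed.

Lemma summand_sum j (l : seq T) : (forall y, List.In y l -> B j y) -> B j (tsum l).
Proof.
have [[[_ [B0 [BD _]]] _] _] := summand_ideal j.
elim: l => [|y l IH] Hl //=.
by apply: BD; [apply: Hl; left|apply: IH => z Hz; apply: Hl; right].
Qed.

Lemma summand_mul_orth j j' y y' : j' <> j -> B j y -> B j' y' -> mul y y' = zero.
Proof.
move=> Nj By By'; have [[_ RB] _] := summand_ideal j; have [_ LB'] := summand_ideal j'.
apply: (summand_indep (RB _ _ By (summand_in_kD By')) (s := [:: (j', mul y y')])).
  by move=> p [<-|[]]; split => //; exact: LB' (summand_in_kD By).
by rewrite /= pa_addr0.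
Qed.

Lemma summand_sum_orth j a (s : seq (J * T)) : B j a ->
  (forall p, List.In p s -> p.1 <> j /\ B p.1 p.2) ->
  mul (tsum (map snd s)) a = zero /\ mul a (tsum (map snd s)) = zero.
Proof.
move=> Ba Hs; rewrite pa_mul_suml pa_mul_sumr.
split; apply: pa_sum_eq0 => _ /List.in_map_iff [p [<- /Hs [Np Bp]]].
- by apply: summand_mul_orth Bp Ba => Ej; apply: Np.
- exact: summand_mul_orth Np Ba Bp.
Qed.

(* Collect into [X] the summands indexed like the first one; the others annihilate
   [B j] on both sides, so [X a X = x a x = 0] for [a] in [B j], whence [X = 0] by
   primality and [x] is a shorter sum. *)
Lemma semiprime_of_direct_sum_primes :
  (forall x, kD x -> exists s : seq (J * T),
     (forall p, List.In p s -> B p.1 p.2) /\ x = tsum (map snd s)) ->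
  r_semiprime kD zero mul.
Proof.
move=> gen x Kx H; have [s [Hs Ex]] := gen x Kx.
move: {2}(size s) (leqnn (size s)) => n; elim: n s x Kx H Hs Ex => [|n IH] s x Kx H Hs Ex Hsz.
  by case: s Hs Ex Hsz.
case: s Hs Ex Hsz => [|p0 s'] Hs Ex Hsz; first by rewrite Ex.
set s := p0 :: s' in Hs Ex; set j := p0.1.
pose P (q : J * T) := `[< q.1 = j >].
set X := tsum (map snd (filter P s)); set R := tsum (map snd (filter (predC P) s)).
have Ex' : x = add X R by rewrite Ex (pa_sum_filter P).
have BX : B j X.
  by apply: summand_sum => _ /List.in_map_iff [q [<- /In_filter [Iq /asboolP <-]]]; exact: Hs.
have HR q : List.In q (filter (predC P) s) -> q.1 <> j /\ B q.1 q.2.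
  by move=> /In_filter [Iq /asboolP Nq]; split => //; exact: Hs.
have X0 : X = zero.
  suff XaX a : B j a -> mul (mul X a) X = zero by case: (summand_prime BX BX XaX).
  move=> Ba; have [[_ RB] _] := summand_ideal j.
  have [Ra _] := summand_sum_orth Ba HR.
  have [_ XaR] := summand_sum_orth (RB _ _ BX (summand_in_kD Ba)) HR.
  have := H a (summand_in_kD Ba).
  by rewrite Ex' pa_mulDl Ra pa_addr0 pa_mulDr XaR pa_addr0.
have xR : x = R by rewrite Ex' X0 pa_add0.
rewrite xR; apply: (IH (filter (predC P) s)) => //.
- by rewrite -xR.
- by move=> a Ka; rewrite -xR; exact: H.
- by move=> q /HR [].
- have -> : size (filter (predC P) s) = size (filter (predC P) s').
    by rewrite /= /P; case: asboolP.
  by rewrite size_filter; apply: leq_trans (count_size _ _) _; rewrite -ltnS.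
Qed.

End DirectSumOfPrimes.

Lemma reach_sym_iff_A_sub_eq0_sym : reach_sym src tgt <->
  (forall i j, (forall f, Asub i j f -> f = zero) <-> (forall f, Asub j i f -> f = zero)).
Proof.
split; first by move=> S i j; rewrite !A_sub_eq0_iff; split => N R; apply/N/S.
move=> H u v R; apply: NNPP => N.
by have [Hvu _] := H v u; move: Hvu; rewrite !A_sub_eq0_iff => Hvu; exact: Hvu N R.
Qed.

Lemma reach_sym_iff_semiprime : reach_sym src tgt <-> r_semiprime kD zero mul.
Proof.
split; first exact: semiprime_of_reach_sym.
move=> H; apply: NNPP => NS; have [i [j [l [W [El N]]]]] := nonreturning_walk NS.
exact: not_semiprime_of_nonreturning W El N H.
Qed.

Lemma reach_sym_iff_direct_sum_of_primes : reach_sym src tgt <-> pa_direct_sum_of_primes k src tgt.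
Proof.
split; first exact: direct_sum_of_primes_of_reach_sym.
move=> [J [B [HI [HP [HG HInd]]]]]; apply/reach_sym_iff_semiprime.
exact: semiprime_of_direct_sum_primes (fun j => proj1 (HI j)) HP HInd HG.
Qed.

Lemma reach_sym_iff_radical_zero rk :
  reach_sym src tgt <-> ring_radical_zero rk kD zero add opp mul.
Proof.
split.
  case: rk => S /=.
  - exact: baer_zero_of_reach_sym.
  - exact: nil_zero_of_reach_sym.
  - exact/r_levitzki_zero_of_nil/nil_zero_of_reach_sym.
  - exact: jacobson_zero_of_reach_sym.
move=> H; apply: NNPP => NS; have [i [j [l [W [El N]]]]] := nonreturning_walk NS.
exact: not_radical_zero_of_nonreturning W El N rk H.
Qed.

Lemma reach_sym_iff_A_sub_semiprime :
  reach_sym src tgt <-> forall i j, g_semiprime (Asub i j) (Asub j i) zero gmul.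
Proof.
split; first exact: g_semiprime_of_reach_sym.
move=> H; apply: NNPP => NS; have [i [j [l [W [El N]]]]] := nonreturning_walk NS.
exact: not_g_semiprime_of_nonreturning W El N (H i j).
Qed.

Lemma reach_sym_iff_A_sub_radical_zero rk : reach_sym src tgt <->
  forall i j, gamma_radical_zero rk (Asub i j) (Asub j i) zero add opp gmul.
Proof.
split.
  case: rk => S i j /=.
  - exact: g_baer_zero_of_reach_sym.
  - exact: g_nil_zero_of_reach_sym.
  - exact/g_levitzki_zero_of_nil/g_nil_zero_of_reach_sym.
  - exact: g_jacobson_zero_of_reach_sym.
move=> H; apply: NNPP => NS; have [i [j [l [W [El N]]]]] := nonreturning_walk NS.
exact: not_g_radical_zero_of_nonreturning W El N rk (H i j).
Qed.

End PathAlgebra.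

Theorem theorem3p7 (k : fieldType) (I E : Type) (src tgt : E -> I) (rk : radical_kind) :
  [<->
    (* (i) *)
    (forall H, weak_component src tgt H -> strong_component src tgt H);
    (* (ii) *)
    (forall H, unilateral_component src tgt H -> strong_component src tgt H);
    (* (iii) *)
    (forall H, (weak_component src tgt H <-> unilateral_component src tgt H) /\
               (unilateral_component src tgt H <-> strong_component src tgt H));
    (* (iv) *)
    ((forall v, exists H, strong_component src tgt H /\ sg_v H v) /\
     (forall e, exists H, strong_component src tgt H /\ sg_e H e));
    (* (v) *)
    ~ has_regular_path src tgt;
    (* (vi) *)
    (forall i j,
       (forall f, A_sub (k:=k) src tgt i j f -> f = @pa_zero k I E) <->
       (forall f, A_sub (k:=k) src tgt j i f -> f = @pa_zero k I E));
    (* (vii) *)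
    pa_direct_sum_of_primes k src tgt;
    (* (viii) *)
    r_semiprime (in_kD (k:=k) src tgt) (@pa_zero k I E) (pa_mul tgt);
    (* (ix) *)
    (forall i j, g_semiprime (A_sub (k:=k) src tgt i j) (A_sub src tgt j i)
                   (@pa_zero k I E) (pa_gmul tgt));
    (* (x) *)
    (forall i j, gamma_radical_zero rk (A_sub (k:=k) src tgt i j) (A_sub src tgt j i)
                   (@pa_zero k I E) (@pa_add k I E) (@pa_opp k I E) (pa_gmul tgt));
    (* (xi) *)
    ring_radical_zero rk (in_kD (k:=k) src tgt) (@pa_zero k I E) (@pa_add k I E)
      (@pa_opp k I E) (pa_mul tgt)
  ].
Proof.
have e1 := reach_sym_iff_weak_components_strong src tgt.
have e2 := reach_sym_iff_unilateral_components_strong src tgt.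
have e3 := reach_sym_iff_components_coincide src tgt.
have e4 := reach_sym_iff_strong_components_cover src tgt.
have e5 := reach_sym_iff_no_regular_path src tgt.
have e6 := reach_sym_iff_A_sub_eq0_sym k src tgt.
have e7 := reach_sym_iff_direct_sum_of_primes k src tgt.
have e8 := reach_sym_iff_semiprime k src tgt.
have e9 := reach_sym_iff_A_sub_semiprime k src tgt.
have e10 := reach_sym_iff_A_sub_radical_zero k src tgt rk.
have e11 := reach_sym_iff_radical_zero k src tgt rk.
tfae.
- by move=> /e1 /e2.
- by move=> /e2 /e3.
- by move=> /e3 /e4.
- by move=> /e4 /e5.
- by move=> /e5 /e6.
- by move=> /e6 /e7.
- by move=> /e7 /e8.
- by move=> /e8 /e9.
- by move=> /e9 /e10.
- by move=> /e10 /e11.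
- by move=> /e11 /e1.
Qed.
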